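(* Assume the setting below and sharp missingness: $M_i(1)=M_i(0)$ for all $i$. Fix $\boldsymbol\delta\in\mathbb R^n$ and let $\mathcal S=\{i:M_i=1\}$, $n_{\mathcal S1}=\sum_{i\in\mathcal S}Z_i$, $n_{\mathcal S0}=|\mathcal S|-n_{\mathcal S1}$. Define $t_{\mathrm R,\phi,\mathcal S}(\boldsymbol z,\boldsymbol y)=t_{\mathrm R,\phi}(\boldsymbol z_{\mathcal S},\boldsymbol y_{\mathcal S})$ (statistic computed on the subvectors indexed by $\mathcal S$, original order kept) and $G_{\mathrm R,\phi,\mathcal S}(c)=\mathbb P(t_{\mathrm R,\phi,\mathcal S}(\boldsymbol A,\boldsymbol y_0)\ge c)$, where $\boldsymbol A_{\mathcal S}$ is uniform over assignments of the units of $\mathcal S$ with exactly $n_{\mathcal S1}$ treated and $\boldsymbol y_0\in\mathbb R^n$ is any fixed vector. Then $p_{\boldsymbol Z,\boldsymbol\delta,\mathcal S}=G_{\mathrm R,\phi,\mathcal S}\big(t_{\mathrm R,\phi,\mathcal S}(\boldsymbol Z,\boldsymbol Y-\boldsymbol\delta\circ\boldsymbol Z)\big)$ is a valid p-value for $H_{\boldsymbol\delta}:\boldsymbol\tau=\boldsymbol\delta$: if $H_{\boldsymbol\delta}$ holds, $\mathbb P(p_{\boldsymbol Z,\boldsymbol\delta,\mathcal S}\le\alpha)\le\alpha$ for all $\alpha\in(0,1)$.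
   Context: There are $n$ units with fixed potential outcomes $Y_i^\star(0),Y_i^\star(1)\in\mathbb R$ and fixed potential missingness indicators $M_i(0),M_i(1)\in\{0,1\}$; $\tau_i=Y_i^\star(1)-Y_i^\star(0)$. $\boldsymbol Z\in\{0,1\}^n$ is from a completely randomized experiment: uniform over vectors with exactly $n_1$ ones ($n_1,n_0\ge1$ fixed, $n_1+n_0=n$), independent of all potential quantities; probabilities are over $\boldsymbol Z$. $M_i=Z_iM_i(1)+(1-Z_i)M_i(0)$; the realized outcome $Z_iY_i^\star(1)+(1-Z_i)Y_i^\star(0)$ is observed, denoted $Y_i$, iff $M_i=1$; only coordinates in $\mathcal S$ of $\boldsymbol Y-\boldsymbol\delta\circ\boldsymbol Z$ are used. $\circ$ is the entrywise product. $\psi_{i,j}(y,y')=\mathbf 1\{y>y'\}+\mathbf 1\{y=y'\}\mathbf 1\{i\ge j\}$; $\mathrm{rank}_i(\boldsymbol y)=\sum_j\psi_{i,j}(y_i,y_j)$; $\phi$ nondecreasing real function on the nonnegative integers; $t_{\mathrm R,\phi}(\boldsymbol z,\boldsymbol y)$ is either $\sum_i z_i\phi(\mathrm{rank}_i(\boldsymbol y))$ or $\sum_i z_i\phi(\sum_j(1-z_j)\psi_{i,j}(y_i,y_j))$ (sums over units of the given vectors); the result holds for either. *)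

From HB Require Import structures.
From mathcomp Require Import all_boot all_order all_algebra.
Set Implicit Arguments. Unset Strict Implicit. Unset Printing Implicit Defensive.
Import Order.TTheory GRing.Theory Num.Theory.
Local Open Scope ring_scope.

Definition assign (m k : nat) : {set {ffun 'I_m -> bool}} :=
  [set z : {ffun 'I_m -> bool} | #|[set i | z i]| == k].

Definition unifP (R : realFieldType) (m k : nat) (E : pred {ffun 'I_m -> bool}) : R :=
  (#|[set z in assign m k | E z]|%:R / #|assign m k|%:R).
Arguments unifP R m k E : clear implicits.

Definition psi (R : realFieldType) (m : nat) (i j : 'I_m) (y y' : R) : nat :=
  (((y' < y)%R : nat) + ((y == y') && (j <= i)%N : nat))%N.

Definition rank_ (R : realFieldType) (m : nat) (y : 'I_m -> R) (i : 'I_m) : nat :=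
  (\sum_j psi i j (y i) (y j))%N.

Inductive rank_kind := FullRank | ControlRank.

Definition tR (R : realFieldType) (kind : rank_kind) (phi : nat -> R) (m : nat)
  (z : 'I_m -> bool) (y : 'I_m -> R) : R :=
  \sum_i (z i)%:R *
    phi (match kind with
         | FullRank => rank_ y i
         | ControlRank => (\sum_j (1 - z j) * psi i j (y i) (y j))%N
         end).

(* Subvector indexed by S, in the original (increasing) order of indices. *)
Definition subv (T : Type) (n : nat) (S : {set 'I_n}) (f : 'I_n -> T) : 'I_#|S| -> T :=
  fun k => f (enum_val k).
Arguments subv {T n} S f _.

Definition tS (R : realFieldType) (kind : rank_kind) (phi : nat -> R) (n : nat)
  (S : {set 'I_n}) (z : 'I_n -> bool) (y : 'I_n -> R) : R :=
  tR kind phi (subv S z) (subv S y).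

Definition G (R : realFieldType) (kind : rank_kind) (phi : nat -> R) (n : nat)
  (S : {set 'I_n}) (k : nat) (y0 : 'I_n -> R) (c : R) : R :=
  unifP R #|S| k (fun a : {ffun 'I_#|S| -> bool} => c <= tR kind phi a (subv S y0)).

Definition pval (R : realFieldType) (kind : rank_kind) (phi : nat -> R) (n : nat)
  (Y0 Y1 : 'I_n -> R) (M0 M1 : 'I_n -> bool) (delta y0 : 'I_n -> R)
  (z : 'I_n -> bool) : R :=
  let M := fun i => if z i then M1 i else M0 i in
  let S := [set i | M i] in
  let Y := fun i => if z i then Y1 i else Y0 i in
  let nS1 := #|[set i in S | z i]| in
  G kind phi S nS1 y0 (tS kind phi S z (fun i => Y i - delta i * (z i)%:R)).

From HB Require Import structures.
From mathcomp Require Import all_boot all_order all_algebra.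
From mathcomp Require Import fingroup perm.
(* Imported after perm, whose [pval] would otherwise shadow [Defs.pval]. *)
From Pilot Require Import Defs.
Import Order.TTheory GRing.Theory Num.Theory.
Set Implicit Arguments. Unset Strict Implicit. Unset Printing Implicit Defensive.
Local Open Scope ring_scope.

(** Under sharp missingness the analysed set S = {i : M_i = 1} does not depend
    on Z, and under H_delta the adjusted outcomes Y - delta o Z are just Y(0);
    so the p-value is a function of Z_S alone.  Conditionally on the number k
    of treated units in S, Z_S is uniform over the assignments of S with k
    treated, and the p-value is the upper tail probability of the observed
    statistic under that law, except that it is computed with the reference
    vector y0 instead of Y(0)_S.  This substitution is harmless: the rank
    statistic sees the outcomes only through the tie-broken order they induce,
    any two such orders are isomorphic through a relabelling of the units, and
    relabelling preserves the uniform law.  The upper tail probability of a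
    statistic at a uniform draw is super-uniform, which gives validity in every
    stratum, hence overall. *)

Lemma card_small_upper_tail_le (T : finType) (d : Order.disp_t) (U : orderType d)
    (R : realFieldType) (A : {set T}) (f : T -> U) (alpha : R) :
  0 <= alpha ->
  #|[set x in A | #|[set x' in A | (f x <= f x')%O]|%:R / #|A|%:R <= alpha]|%:R
    <= alpha * #|A|%:R.
Proof.
move=> alpha_ge0; set B := [set x in A | _].
have [->|[x0 x0B]] := set_0Vmem B; first by rewrite cards0 mulr_ge0.
(* All of B lies in the upper tail of the f-minimum of B. *)
case: (arg_minP f x0B) => x /setIdP[xA tail_x] min_x.
have A_gt0 : (0 : R) < #|A|%:R by rewrite ltr0n; apply/card_gt0P; exists x.
rewrite -ler_pdivrMr // (le_trans _ tail_x) // ler_wpM2r ?invr_ge0 ?ler0n //.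
rewrite ler_nat; apply/subset_leq_card/subsetP => x' x'B.
by rewrite inE min_x // andbT; case/setIdP: x'B.
Qed.

Section OrderRank.
Variables (d : Order.disp_t) (U : orderType d) (T : finType) (f : T -> U).

Definition order_rank (x : T) : nat := #|[set x' | (f x' <= f x)%O]|.

Lemma leq_order_rank x x' : (order_rank x' <= order_rank x)%N = (f x' <= f x)%O.
Proof.
have [le_x'x|lt_xx'] := leP (f x') (f x).
  apply/subset_leq_card/subsetP => z; rewrite !inE => /le_trans; exact.
apply/negbTE; rewrite -ltnNge; apply: proper_card; apply/properP; split.
  by apply/subsetP => z; rewrite !inE => /le_lt_trans/(_ lt_xx')/ltW.
by exists x'; rewrite !inE // -ltNge.
Qed.

Lemma order_rank_gt0 x : (0 < order_rank x)%N.
Proof. by apply/card_gt0P; exists x; rewrite inE. Qed.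

Lemma order_rank_inj : injective f -> injective order_rank.
Proof.
move=> f_inj x x' eq_rank; apply: f_inj; apply/eqP; rewrite eq_le.
by rewrite -!leq_order_rank eq_rank leqnn.
Qed.

End OrderRank.

Lemma order_rank_perm (d : Order.disp_t) (U : orderType d) (m : nat) (f : 'I_m -> U) :
  injective f -> exists rho : {perm 'I_m}, forall i j, (rho i <= rho j)%N = (f i <= f j)%O.
Proof.
move=> f_inj.
have rank_lt i : ((order_rank f i).-1 < m)%N.
  by rewrite prednK ?order_rank_gt0 // (leq_trans (max_card _)) ?card_ord.
have rho_inj : injective (fun i => Ordinal (rank_lt i)).
  move=> i j /(congr1 val) /= /(congr1 succn).
  by rewrite !prednK ?order_rank_gt0 //; apply: order_rank_inj.
exists (perm rho_inj) => i j; rewrite !permE /= -leq_order_rank.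
by rewrite -ltnS !prednK ?order_rank_gt0.
Qed.

Section RankStatistic.
Variables (R : realFieldType) (m : nat).
Implicit Types (y : 'I_m -> R) (a : 'I_m -> bool).

Definition tiebreak_key y (i : 'I_m) : R *l nat := (y i, val i).

Lemma tiebreak_key_inj y : injective (tiebreak_key y).
Proof. by move=> i j [_ /val_inj]. Qed.

Lemma psiE y i j : psi i j (y i) (y j) = (tiebreak_key y j <= tiebreak_key y i)%O :> nat.
Proof.
rewrite /psi lexi_pair /=.
by case: (ltgtP (y j) (y i)) => [||_] /=; rewrite ?leEnat.
Qed.

Lemma psi_isomorphic y y' : exists rho : {perm 'I_m}, forall i j,
  psi i j (y i) (y j) = psi (rho i) (rho j) (y' (rho i)) (y' (rho j)).
Proof.
have [rho1 rho1E] := order_rank_perm (@tiebreak_key_inj y).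
have [rho2 rho2E] := order_rank_perm (@tiebreak_key_inj y').
exists (rho1 * rho2^-1)%g => i j.
by rewrite !psiE -rho1E -rho2E !permM !permKV.
Qed.

Lemma eq_tR kind (phi : nat -> R) a a' y y' :
  a =1 a' -> y =1 y' -> tR kind phi a y = tR kind phi a' y'.
Proof.
move=> eq_a eq_y; apply: eq_bigr => i _; rewrite eq_a; congr (_ * phi _).
by case: kind; [rewrite /rank_|]; apply: eq_bigr => j _; rewrite ?eq_a !eq_y.
Qed.

Lemma tR_relabel kind (phi : nat -> R) (rho : {perm 'I_m}) a y y' :
  (forall i j, psi i j (y i) (y j) = psi (rho i) (rho j) (y' (rho i)) (y' (rho j))) ->
  tR kind phi a y = tR kind phi (fun i => a ((rho^-1)%g i)) y'.
Proof.
move=> psi_rho; rewrite /tR [RHS](reindex_inj (@perm_inj _ rho)) /=.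
apply: eq_bigr => i _; rewrite permK; congr (_ * phi _).
case: kind; rewrite ?/rank_ [RHS](reindex_inj (@perm_inj _ rho));
  by apply: eq_bigr => j _; rewrite psi_rho ?permK.
Qed.

End RankStatistic.

Definition relabel m (rho : {perm 'I_m}) (a : {ffun 'I_m -> bool}) : {ffun 'I_m -> bool} :=
  [ffun i => a ((rho^-1)%g i)].

Lemma relabel_inj m (rho : {perm 'I_m}) : injective (relabel rho).
Proof.
by move=> a a' /ffunP eq_a; apply/ffunP => i; have := eq_a (rho i); rewrite !ffunE permK.
Qed.

Lemma card_relabel m (rho : {perm 'I_m}) a :
  #|[set i | relabel rho a i]| = #|[set i | a i]|.
Proof.
have -> : [set i | relabel rho a i] = rho^-1%g @^-1: [set i | a i].
  by apply/setP => i; rewrite !inE ffunE.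
by rewrite card_preimset //; apply: perm_inj.
Qed.

Lemma card_assign_relabel m k (rho : {perm 'I_m}) (P : pred {ffun 'I_m -> bool}) :
  #|[set a in assign m k | P (relabel rho a)]| = #|[set a in assign m k | P a]|.
Proof.
rewrite -[RHS](card_preimset _ (@relabel_inj _ rho)); apply: eq_card => a.
by rewrite !inE card_relabel.
Qed.

Lemma card_tR_ge_outcome_indep (R : realFieldType) kind (phi : nat -> R) m k
    (y y' : 'I_m -> R) c :
  #|[set a in assign m k | c <= tR kind phi a y]| =
  #|[set a in assign m k | c <= tR kind phi a y']|.
Proof.
have [rho psi_rho] := psi_isomorphic y y'.
rewrite -[RHS](card_assign_relabel k rho); apply: eq_card => a; rewrite !inE.
rewrite (tR_relabel _ _ _ psi_rho); congr (_ && (_ <= _)).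
by apply: eq_tR => // i; rewrite ffunE.
Qed.

Lemma card_pvalue_le (R : realFieldType) kind (phi : nat -> R) m k
    (w w0 : 'I_m -> R) (alpha : R) :
  0 <= alpha ->
  #|[set a in assign m k |
      unifP R m k (fun b => tR kind phi a w <= tR kind phi b w0) <= alpha]|%:R
    <= alpha * #|assign m k|%:R.
Proof.
move=> alpha_ge0; rewrite /unifP.
under eq_finset => a do rewrite (card_tR_ge_outcome_indep _ _ _ w0 w).
exact: (card_small_upper_tail_le (assign m k)
  (fun a : {ffun 'I_m -> bool} => tR kind phi a w)).
Qed.

Section Restriction.
Variables (n : nat) (S : {set 'I_n}).
Implicit Types (z : {ffun 'I_n -> bool}) (a : {ffun 'I_#|S| -> bool}).

Definition subvf (T : {set 'I_n}) z : {ffun 'I_#|T| -> bool} := [ffun r => z (enum_val r)].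

Lemma card_subvf (T : {set 'I_n}) z : #|[set r | subvf T z r]| = #|[set i in T | z i]|.
Proof.
rewrite -(card_imset _ (@enum_val_inj _ _)); apply: eq_card => i; rewrite inE.
apply/imsetP/andP => [[r]|[iT zi]]; first by rewrite inE ffunE => zr ->; rewrite enum_valP.
by exists (enum_rank_in iT i); rewrite ?inE ?ffunE enum_rankK_in.
Qed.

Lemma card_subvf_split z :
  #|[set i | z i]| = (#|[set r | subvf S z r]| + #|[set r | subvf (~: S) z r]|)%N.
Proof.
rewrite !card_subvf -(cardsID S [set i | z i]).
by congr (_ + _)%N; apply: eq_card => i; rewrite !inE andbC.
Qed.

Lemma subvf_split_inj z z' :
  subvf S z = subvf S z' -> subvf (~: S) z = subvf (~: S) z' -> z = z'.
Proof.
move=> /ffunP eqS /ffunP eqSC; apply/ffunP => i.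
have [iS|iS] := boolP (i \in S).
  by have := eqS (enum_rank_in iS i); rewrite !ffunE enum_rankK_in.
have iSC : i \in ~: S by rewrite inE.
by have := eqSC (enum_rank_in iSC i); rewrite !ffunE enum_rankK_in.
Qed.

Lemma subvf_split_surj a (u : {ffun 'I_#|~: S| -> bool}) :
  exists z, subvf S z = a /\ subvf (~: S) z = u.
Proof.
pose split z := (subvf S z, subvf (~: S) z).
have split_inj : injective split by move=> z z' [] /subvf_split_inj; apply.
have card_le : (#|{: {ffun 'I_#|S| -> bool} * {ffun 'I_#|~: S| -> bool}}|
                  <= #|{: {ffun 'I_n -> bool}}|)%N.
  by rewrite card_prod !card_ffun !card_bool !card_ord -expnD cardsC card_ord.
by have /codomP[z [-> ->]] := inj_card_onto split_inj card_le (a, u); exists z.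
Qed.

Definition ncompletions (n1 k : nat) : nat :=
  #|[set u : {ffun 'I_#|~: S| -> bool} | (k + #|[set r | u r]|)%N == n1]|.

Lemma card_subvf_fiber n1 a :
  #|[set z in assign n n1 | subvf S z == a]| = ncompletions n1 #|[set r | a r]|.
Proof.
rewrite -(card_in_imset (f := subvf (~: S))); last first.
  move=> z z' /setIdP[_ /eqP eq_z] /setIdP[_ /eqP eq_z'].
  by apply: subvf_split_inj; rewrite eq_z eq_z'.
apply: eq_card => u; rewrite inE; apply/imsetP/idP => [[z]|card_u].
  by rewrite !inE card_subvf_split => /andP[/eqP <- /eqP ->] ->.
have [z [za zu]] := subvf_split_surj a u.
by exists z; rewrite // !inE card_subvf_split za zu card_u eqxx.
Qed.

Lemma card_assign_subvf n1 (h : pred {ffun 'I_#|S| -> bool}) :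
  #|[set z in assign n n1 | h (subvf S z)]| =
  (\sum_(k < #|S|.+1) ncompletions n1 k * #|[set a in assign #|S| k | h a]|)%N.
Proof.
have card_lt a : (#|[set r | a r]| < #|S|.+1)%N.
  by rewrite ltnS (leq_trans (max_card _)) ?card_ord.
rewrite -sum1dep_card (partition_big (subvf S) h) /=; last by move=> z /andP[].
rewrite (partition_big (fun a => Ordinal (card_lt a)) predT) //=.
apply: eq_bigr => k _; rewrite mulnC -sum_nat_cond_const.
apply: eq_big => [a|a /andP[ha /eqP <-]]; first by rewrite !inE andbC -val_eqE.
rewrite -card_subvf_fiber -sum1dep_card; apply: eq_bigl => z.
by case: eqP => [->|]; rewrite ?ha ?andbT ?andbF.
Qed.

Lemma card_assign_subvf_le (R : realFieldType) n1 (h : pred {ffun 'I_#|S| -> bool})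
    (alpha : R) :
  (forall k, #|[set a in assign #|S| k | h a]|%:R <= alpha * #|assign #|S| k|%:R) ->
  #|[set z in assign n n1 | h (subvf S z)]|%:R <= alpha * #|assign n n1|%:R.
Proof.
move=> card_h_le.
have card_assign m k (P : pred {ffun 'I_m -> bool}) :
  P =1 predT -> #|[set a in assign m k | P a]| = #|assign m k|.
  by move=> P_T; apply: eq_card => a; rewrite inE P_T andbT.
rewrite -(card_assign n n1 (fun z => predT (subvf S z))) // !card_assign_subvf.
rewrite !natr_sum mulr_sumr; apply: ler_sum => k _.
by rewrite !natrM mulrCA [in alpha * _]card_assign //; apply: ler_wpM2l.
Qed.

End Restriction.

Lemma pval_sharp_null (R : realFieldType) kind (phi : nat -> R) n (Y0 Y1 : 'I_n -> R)
    (M0 M1 : 'I_n -> bool) (delta y0 : 'I_n -> R) (z : {ffun 'I_n -> bool}) :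
  (forall i, M1 i = M0 i) -> (forall i, Y1 i - Y0 i = delta i) ->
  let S := [set i | M0 i] in
  pval kind phi Y0 Y1 M0 M1 delta y0 z =
  G kind phi S #|[set r | subvf S z r]| y0 (tR kind phi (subvf S z) (subv S Y0)).
Proof.
move=> sharpM nullY S; rewrite /pval /=.
have -> : [set i | if z i then M1 i else M0 i] = S.
  by apply/setP => i; rewrite !inE sharpM; case: (z i).
rewrite /tS card_subvf; congr (G _ _ _ _ _ _); apply: eq_tR => r; rewrite /subv ?ffunE //.
by case: (z _); rewrite ?mulr1 ?mulr0 ?subr0 // -nullY opprB addrC subrK.
Qed.

Theorem theorem8 (R : realFieldType) (kind : rank_kind) (phi : nat -> R)
  (n n1 : nat) (Y0 Y1 : 'I_n -> R) (M0 M1 : 'I_n -> bool) (delta y0 : 'I_n -> R) :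
  (0 < n1)%N -> (n1 < n)%N ->
  {homo phi : a b / (a <= b)%N >-> a <= b} ->
  (forall i, M1 i = M0 i) ->
  (forall i, Y1 i - Y0 i = delta i) ->
  forall alpha : R, 0 < alpha -> alpha < 1 ->
    unifP R n n1 (fun z : {ffun 'I_n -> bool} =>
                    pval kind phi Y0 Y1 M0 M1 delta y0 z <= alpha) <= alpha.
Proof.
move=> _ _ _ sharpM nullY alpha alpha_gt0 _.
set S := [set i | M0 i]; rewrite /unifP.
under eq_finset => z do rewrite pval_sharp_null //.
have [->|assign_gt0] := posnP #|assign n n1|; first by rewrite invr0 mulr0 ltW.
rewrite ler_pdivrMr ?ltr0n //; apply: (@card_assign_subvf_le _ S _ n1 (fun a =>
  G kind phi S #|[set r | a r]| y0 (tR kind phi a (subv S Y0)) <= alpha)) => k.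
apply: le_trans (card_pvalue_le kind phi k (subv S Y0) (subv S y0) (ltW alpha_gt0)).
rewrite ler_nat; apply/subset_leq_card/subsetP => a.
by rewrite !inE => /andP[/[dup] /eqP-> ->].
Qed.
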